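(* Assume (H1)–(H5), let $z\in(0,z_s)$ and $\eta\in(0,\tfrac12\log\frac{z_s}{z})$. There exists a constant $K>0$, depending only on $(a_i)$, $(b_i)$, $z$ and $\eta$, such that for every compactly supported sequence $h=(h_i)_{i\ge1}$, $$\|L(h)\|_{\mathcal Z}\le K\|h\|_{\mathcal Z_{\mathcal D}}.$$
   Context: Let $(a_i)_{i\ge1}$, $(b_i)_{i\ge1}$ be nonnegative sequences. $Q_1=1$, $Q_i=\prod_{j=2}^i\frac{a_{j-1}}{b_j}$ for $i\ge2$; $z_s$ is the radius of convergence of $\sum_ia_iQ_iz^i$. For fixed $z\in(0,z_s)$ put $\Theta_i=Q_iz^i$. Define $\sigma_1=3a_1z+\sum_{i\ge1}a_i\Theta_i$ and $\sigma_i=a_iz+b_i$ for $i\ge2$. $\mathcal Z$ is the space of sequences with $\|h\|_{\mathcal Z}=\sum_ie^{\eta i}\Theta_i|h_i|<\infty$ and $\mathcal Z_{\mathcal D}$ those with $\|h\|_{\mathcal Z_{\mathcal D}}=\sum_i(1+\sigma_i)e^{\eta i}\Theta_i|h_i|<\infty$. Linear operators $S,P$ are defined on compactly supported sequences $h$ by: for all compactly supported $\varphi$, $\sum_iS_i(h)\Theta_i\varphi_i=\sum_{i\ge1}[\varphi_{i+1}-\varphi_i-\varphi_1]a_i\Theta_1\Theta_i(h_i+h_1-h_{i+1})$ and $\sum_iP_i(h)\Theta_i\varphi_i=-\varphi_1\big(a_1\Theta_1^2h_2+\sum_{i\ge1}a_i\Theta_1\Theta_ih_{i+1}\big)$; and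 $L=S+P$. (H1): for some $\alpha\in[0,1]$ there exists $a\ge0$ with $0\le a_i\le a\,i^\alpha$ and $b_i\ge0$ for all $i$. (H2): $\inf_i a_i>0$ and $\inf_i b_i>0$. (H3): $\lim_{i\to\infty}Q_{i+1}/Q_i=1/z_s$. (H4): there is $l>0$ with $\lim_{i\to\infty}a_{i+1}/a_i=l$. (H5): there exist $\beta\in[0,1]$ and $b>0$ with $b_i\le b\,i^\beta$ for all $i\ge1$. *)

From Stdlib Require Import Reals Lra.
From Coquelicot Require Import Coquelicot.
Open Scope R_scope.

(* Sequences are maps nat -> R; only indices i >= 1 are meaningful
   (index 0 is ignored everywhere). *)

(* Q_1 = 1, Q_i = prod_{j=2}^i a_{j-1}/b_j, i.e. Q_{m+1} = Q_m * a_m / b_{m+1}. *)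
Fixpoint Qseq (a b : nat -> R) (n : nat) : R :=
  match n with
  | O => 1
  | S m => match m with
           | O => 1
           | S _ => Qseq a b m * a m / b n
           end
  end.

Definition zs (a b : nat -> R) : Rbar :=
  CV_radius (fun n => match n with O => 0 | _ => a n * Qseq a b n end).

Definition Theta (a b : nat -> R) (z : R) (i : nat) : R := Qseq a b i * z ^ i.

Definition compact_support (h : nat -> R) : Prop :=
  exists N : nat, forall i : nat, (N < i)%nat -> h i = 0.

Definition wS (a b : nat -> R) (z : R) (h : nat -> R) (i : nat) : R :=
  a i * Theta a b z 1 * Theta a b z i * (h i + h 1%nat - h (S i)).

(* S(h): from sum_i S_i(h) Theta_i phi_i = sum_{i>=1} [phi_{i+1}-phi_i-phi_1] w_i,
   the coefficient of phi_1 is -w_1 - sum_{i>=1} w_i and that of phi_j (j>=2)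
   is w_{j-1} - w_j. *)
Definition Sop (a b : nat -> R) (z : R) (h : nat -> R) (j : nat) : R :=
  match j with
  | O => 0
  | S O => (- wS a b z h 1%nat - Series (fun n => wS a b z h (S n))) / Theta a b z 1
  | S (S _ as m) => (wS a b z h m - wS a b z h j) / Theta a b z j
  end.

Definition Pop (a b : nat -> R) (z : R) (h : nat -> R) (j : nat) : R :=
  match j with
  | S O => - (a 1%nat * (Theta a b z 1) ^ 2 * h 2%nat
              + Series (fun n => a (S n) * Theta a b z 1 * Theta a b z (S n) * h (S (S n))))
           / Theta a b z 1
  | _ => 0
  end.

Definition Lop (a b : nat -> R) (z : R) (h : nat -> R) (j : nat) : R :=
  Sop a b z h j + Pop a b z h j.

Definition sigma (a b : nat -> R) (z : R) (i : nat) : R :=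
  match i with
  | S O => 3 * a 1%nat * z + Series (fun n => a (S n) * Theta a b z (S n))
  | _ => a i * z + b i
  end.

(* terms of the weighted norms, indexed from i = 1 (series index n <-> i = n+1) *)
Definition normZ_term (a b : nat -> R) (z eta : R) (h : nat -> R) (n : nat) : R :=
  exp (eta * INR (S n)) * Theta a b z (S n) * Rabs (h (S n)).

Definition normZ (a b : nat -> R) (z eta : R) (h : nat -> R) : R :=
  Series (normZ_term a b z eta h).

Definition normZD (a b : nat -> R) (z eta : R) (h : nat -> R) : R :=
  Series (fun n => (1 + sigma a b z (S n)) * exp (eta * INR (S n))
                   * Theta a b z (S n) * Rabs (h (S n))).

Definition H1 (a b : nat -> R) : Prop :=
  exists alpha : R, 0 <= alpha <= 1 /\ exists a0 : R, 0 <= a0 /\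
    forall i : nat, (1 <= i)%nat ->
      0 <= a i <= a0 * Rpower (INR i) alpha /\ 0 <= b i.

Definition H2 (a b : nat -> R) : Prop :=
  (exists ca : R, 0 < ca /\ forall i : nat, (1 <= i)%nat -> ca <= a i) /\
  (exists cb : R, 0 < cb /\ forall i : nat, (1 <= i)%nat -> cb <= b i).

Definition H3 (a b : nat -> R) : Prop :=
  is_lim_seq (fun n => Qseq a b (S (S n)) / Qseq a b (S n)) (Rbar_inv (zs a b)).

Definition H4 (a : nat -> R) : Prop :=
  exists l : R, 0 < l /\ is_lim_seq (fun n => a (S (S n)) / a (S n)) l.

Definition H5 (b : nat -> R) : Prop :=
  exists beta : R, 0 <= beta <= 1 /\ exists b0 : R, 0 < b0 /\
    forall i : nat, (1 <= i)%nat -> b i <= b0 * Rpower (INR i) beta.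

(* For [i >= 2] the weak form gives [Theta_i L_i(h) = w_{i-1} - w_i] with fluxes
   [w_i = a_i z Theta_i (h_i + h_1 - h_{i+1})], and [Theta_1 L_1(h)] is [-w_1 - sum w_i]
   minus the terms of [P]. Each weighted flux obeys
   [e^{eta i} |w_i| <= p_i + p_{i+1} + u_i |h_1|], where [p_i] is the [Z_D]-term of [h]:
   [a_i z <= 1 + sigma_i] handles [h_i], and [a_i z Theta_i = b_{i+1} Theta_{i+1}] with
   [b_{i+1} <= 1 + sigma_{i+1}] handles [h_{i+1}]. The weights [u_i = e^{eta i} a_i z Theta_i]
   are summable because [z e^eta < z_s], and [|h_1| <= p_1 / (e^eta z)]. Summing over [i]
   gives the estimate with [K = (3 e^eta + 1) (2 + sum u / (e^eta z)) + 2 e^eta].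
   Only the positivity in (H2) and the bound on [eta] are used; (H1), (H3)-(H5) are not. *)

From Pilot Require Import Defs.
From Stdlib Require Import Reals Lra Lia.
From Coquelicot Require Import Coquelicot.
Open Scope R_scope.

Lemma Series_nonneg (f : nat -> R) :
  (forall n, 0 <= f n) -> ex_series f -> 0 <= Series f.
Proof.
  intros f_ge0 f_sum.
  replace 0 with (Series (fun n => 0 * f n)).
  - apply Series_le; auto. intros n. rewrite Rmult_0_l. split; [lra | auto].
  - rewrite Series_scal_l. apply Rmult_0_l.
Qed.

Lemma head_le_Series (f : nat -> R) :
  (forall n, 0 <= f n) -> ex_series f -> f 0%nat <= Series f.
Proof.
  intros f_ge0 f_sum. rewrite (Series_incr_1 f f_sum).
  assert (0 <= Series (fun n => f (S n))).
  { apply Series_nonneg; auto. apply (proj1 (ex_series_incr_1 f)); auto. }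
  lra.
Qed.

Lemma Series_tail_le (f : nat -> R) :
  (forall n, 0 <= f n) -> ex_series f -> Series (fun n => f (S n)) <= Series f.
Proof.
  intros f_ge0 f_sum. rewrite (Series_incr_1 f f_sum). pose proof (f_ge0 0%nat). lra.
Qed.

Lemma ex_series_dominated (f g : nat -> R) :
  (forall n, Rabs (f n) <= g n) -> ex_series g -> ex_series f.
Proof. apply (@ex_series_le R_AbsRing R_CompleteNormedModule). Qed.

Lemma Rabs_Series_le (f g : nat -> R) :
  (forall n, Rabs (f n) <= g n) -> ex_series g -> Rabs (Series f) <= Series g.
Proof.
  intros fg g_sum.
  assert (abs_sum : ex_series (fun n => Rabs (f n))).
  { apply (ex_series_dominated _ g); auto. intros n. rewrite Rabs_Rabsolu. apply fg. }
  eapply Rle_trans; [apply Series_Rabs; auto |].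
  apply Series_le; auto. intros n. split; [apply Rabs_pos | apply fg].
Qed.

Lemma ex_series_eventually_zero (f : nat -> R) (N : nat) :
  (forall n, (N <= n)%nat -> f n = 0) -> ex_series f.
Proof.
  intros f_zero. apply (proj2 (ex_series_incr_n f N)).
  apply ex_series_ext with (fun n => 0 * (/ 2) ^ n).
  - intros n. rewrite f_zero by lia. apply Rmult_0_l.
  - apply (@ex_series_scal_l R_AbsRing R_NormedModule 0). apply ex_series_geom. rewrite Rabs_pos_eq; lra.
Qed.

Lemma exp_mult_INR (x : R) (n : nat) : exp (x * INR n) = exp x ^ n.
Proof.
  induction n as [|n IH].
  - rewrite Rmult_0_r. apply exp_0.
  - rewrite S_INR, Rmult_plus_distr_l, exp_plus, IH, Rmult_1_r. simpl. ring.
Qed.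

Lemma exp_mult_INR_S (x : R) (n : nat) : exp (x * INR (S n)) = exp x * exp (x * INR n).
Proof. rewrite !exp_mult_INR. reflexivity. Qed.

Lemma exp_ge1 (x : R) : 0 <= x -> 1 <= exp x.
Proof. intros x_ge0. pose proof (exp_ineq1_le x). lra. Qed.

Lemma Theta_1 (a b : nat -> R) (z : R) : Theta a b z 1 = z.
Proof. unfold Theta. simpl. ring. Qed.

Lemma Theta_succ (a b : nat -> R) (z : R) (i : nat) :
  (1 <= i)%nat -> b (S i) <> 0 -> b (S i) * Theta a b z (S i) = a i * z * Theta a b z i.
Proof.
  intros i_ge1 b_neq0. destruct i as [|m]; [lia |].
  unfold Theta.
  change (Qseq a b (S (S m))) with (Qseq a b (S m) * a (S m) / b (S (S m))).
  change (z ^ S (S m)) with (z * z ^ S m). field. auto.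
Qed.

Lemma Theta_pos (a b : nat -> R) (z : R) :
  0 < z -> (forall i, (1 <= i)%nat -> 0 < a i /\ 0 < b i) -> forall i, 0 < Theta a b z i.
Proof.
  intros z_pos ab_pos i. unfold Theta. apply Rmult_lt_0_compat; [| apply pow_lt; auto].
  induction i as [|[|k] IH]; try (simpl; lra).
  change (Qseq a b (S (S k))) with (Qseq a b (S k) * a (S k) / b (S (S k))).
  destruct (ab_pos (S k)) as [a_pos _]; [lia |].
  destruct (ab_pos (S (S k))) as [_ b_pos]; [lia |].
  apply Rdiv_lt_0_compat; auto. apply Rmult_lt_0_compat; auto.
Qed.

(* [u_i] of the header, with [i = n + 1]. *)
Definition flux_weight (a b : nat -> R) (z eta : R) (n : nat) : R :=
  exp (eta * INR (S n)) * a (S n) * z * Theta a b z (S n).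

Definition normZD_term (a b : nat -> R) (z eta : R) (h : nat -> R) (n : nat) : R :=
  (1 + Defs.sigma a b z (S n)) * exp (eta * INR (S n)) * Theta a b z (S n) * Rabs (h (S n)).

Lemma normZD_eq (a b : nat -> R) (z eta : R) (h : nat -> R) :
  normZD a b z eta h = Series (normZD_term a b z eta h).
Proof. reflexivity. Qed.

(* The radius of convergence of [sum a_i Q_i x^i] is [z_s], so the series converges at [x = z e^eta]. *)
Lemma ex_series_flux_weight (a b : nat -> R) (z eta : R) :
  0 <= z -> Rbar_lt (Finite (z * exp eta)) (zs a b) -> ex_series (flux_weight a b z eta).
Proof.
  intros z_ge0 radius.
  set (A := fun n => match n with O => 0 | _ => a n * Qseq a b n end).
  assert (inside : Rbar_lt (Rabs (z * exp eta)) (CV_radius A)).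
  { rewrite Rabs_pos_eq; auto. apply Rmult_le_pos; [auto | apply Rlt_le, exp_pos]. }
  pose proof (CV_radius_inside A _ inside) as pseries.
  apply (proj1 (ex_series_incr_1 _)), (ex_series_scal_l z) in pseries.
  eapply ex_series_ext; [| exact pseries]. intros n.
  change (z * (pow_n (z * exp eta) (S n) * (a (S n) * Qseq a b (S n))) =
          exp (eta * INR (S n)) * a (S n) * z * (Qseq a b (S n) * z ^ S n)).
  rewrite pow_n_pow, exp_mult_INR, Rpow_mult_distr. ring.
Qed.

Section LopEstimate.

Variables (a b : nat -> R) (z eta : R).
Hypothesis z_pos : 0 < z.
Hypothesis eta_ge0 : 0 <= eta.
Hypothesis ab_pos : forall i, (1 <= i)%nat -> 0 < a i /\ 0 < b i.
Hypothesis flux_summable : ex_series (flux_weight a b z eta).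

Local Notation Th := (Theta a b z).
Local Notation sig := (Defs.sigma a b z).
Local Notation u := (flux_weight a b z eta).
(* Keeps [apply Rmult_le_pos] from unfolding [Theta] into [Qseq]. *)
Local Opaque Theta.

Let Th_pos : forall i, 0 < Th i := Theta_pos a b z z_pos ab_pos.

Let weight_ge1 (n : nat) : 1 <= exp (eta * INR n).
Proof. apply exp_ge1, Rmult_le_pos; [auto | apply pos_INR]. Qed.

Let Th_next (n : nat) : a (S n) * z * Th (S n) = b (S (S n)) * Th (S (S n)).
Proof.
  symmetry. apply Theta_succ; [lia |]. apply Rgt_not_eq, ab_pos. lia.
Qed.

Lemma ex_series_a_Theta : ex_series (fun n => a (S n) * Th (S n)).
Proof.
  apply (ex_series_dominated _ (fun n => / z * u n)).
  - intros n. destruct (ab_pos (S n)) as [a_pos _]; [lia |].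
    pose proof (Th_pos (S n)). pose proof (weight_ge1 (S n)).
    rewrite Rabs_pos_eq by nra. unfold flux_weight.
    replace (/ z * (exp (eta * INR (S n)) * a (S n) * z * Th (S n)))
      with (exp (eta * INR (S n)) * (a (S n) * Th (S n))) by (field; lra).
    assert (0 <= a (S n) * Th (S n)) by nra. nra.
  - apply (ex_series_scal_l (/ z) u). auto.
Qed.

Lemma Series_a_Theta_ge0 : 0 <= Series (fun n => a (S n) * Th (S n)).
Proof.
  apply Series_nonneg; [| apply ex_series_a_Theta].
  intros n. destruct (ab_pos (S n)) as [? _]; [lia |]. pose proof (Th_pos (S n)). nra.
Qed.

Lemma sigma_ge0 (i : nat) : (1 <= i)%nat -> 0 <= sig i.
Proof.
  intros i_ge1. pose proof Series_a_Theta_ge0.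
  destruct (ab_pos i) as [? ?]; [lia |].
  destruct i as [|[|k]]; [lia | |]; simpl; nra.
Qed.

Lemma a_z_le_sigma (i : nat) : (1 <= i)%nat -> a i * z <= 1 + sig i.
Proof.
  intros i_ge1. pose proof Series_a_Theta_ge0.
  destruct (ab_pos i) as [? ?]; [lia |].
  destruct i as [|[|k]]; [lia | |]; simpl; nra.
Qed.

Lemma b_le_sigma (i : nat) : (2 <= i)%nat -> b i <= 1 + sig i.
Proof.
  intros i_ge2. destruct (ab_pos i) as [? ?]; [lia |].
  destruct i as [|[|k]]; [lia | lia |]; simpl; nra.
Qed.

Lemma Series_flux_weight_ge0 : 0 <= Series u.
Proof.
  apply Series_nonneg; auto. intros n. unfold flux_weight.
  destruct (ab_pos (S n)) as [? _]; [lia |]. pose proof (Th_pos (S n)).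
  pose proof (weight_ge1 (S n)). repeat apply Rmult_le_pos; lra.
Qed.

Definition Lop_bound_constant : R :=
  (3 * exp eta + 1) * (2 + Series u / (exp eta * z)) + 2 * exp eta.

Lemma Lop_bound_constant_pos : 0 < Lop_bound_constant.
Proof.
  unfold Lop_bound_constant. pose proof Series_flux_weight_ge0. pose proof (exp_pos eta).
  assert (0 <= Series u / (exp eta * z)).
  { apply Rdiv_le_0_compat; [auto | apply Rmult_lt_0_compat; auto]. }
  nra.
Qed.

Variable h : nat -> R.
Hypothesis h_summable : ex_series (normZD_term a b z eta h).

Local Notation p := (normZD_term a b z eta h).
Local Notation w := (wS a b z h).

Lemma normZD_term_ge0 (n : nat) : 0 <= p n.
Proof.
  unfold normZD_term. pose proof (sigma_ge0 (S n) ltac:(lia)).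
  pose proof (weight_ge1 (S n)). pose proof (Th_pos (S n)). pose proof (Rabs_pos (h (S n))).
  repeat apply Rmult_le_pos; lra.
Qed.

Lemma abs_h1_le : exp eta * z * Rabs (h 1%nat) <= p 0%nat.
Proof.
  unfold normZD_term. change (INR 1) with 1. rewrite Rmult_1_r, Theta_1.
  pose proof (sigma_ge0 1%nat ltac:(lia)). pose proof (exp_pos eta).
  assert (0 <= exp eta * z * Rabs (h 1%nat)) by (apply Rmult_le_pos; [nra | apply Rabs_pos]).
  nra.
Qed.

Lemma diag_term_le (n : nat) :
  exp (eta * INR (S n)) * (a (S n) * z * Th (S n)) * Rabs (h (S n)) <= p n.
Proof.
  unfold normZD_term. pose proof (a_z_le_sigma (S n) ltac:(lia)).
  assert (0 <= exp (eta * INR (S n)) * Th (S n) * Rabs (h (S n))).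
  { pose proof (weight_ge1 (S n)). pose proof (Th_pos (S n)). pose proof (Rabs_pos (h (S n))).
    repeat apply Rmult_le_pos; lra. }
  nra.
Qed.

Lemma next_term_le (n : nat) :
  exp (eta * INR (S n)) * (a (S n) * z * Th (S n)) * Rabs (h (S (S n))) <= p (S n).
Proof.
  unfold normZD_term. rewrite Th_next, (exp_mult_INR_S eta (S n)).
  pose proof (b_le_sigma (S (S n)) ltac:(lia)). pose proof (exp_ge1 eta eta_ge0).
  pose proof (weight_ge1 (S n)). destruct (ab_pos (S (S n))) as [_ ?]; [lia |].
  assert (0 <= Th (S (S n)) * Rabs (h (S (S n)))).
  { pose proof (Th_pos (S (S n))). pose proof (Rabs_pos (h (S (S n)))). nra. }
  set (X := Th (S (S n)) * Rabs (h (S (S n)))) in *.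
  replace (exp (eta * INR (S n)) * (b (S (S n)) * Th (S (S n))) * Rabs (h (S (S n))))
    with (exp (eta * INR (S n)) * b (S (S n)) * X) by (unfold X; ring).
  replace ((1 + sig (S (S n))) * (exp eta * exp (eta * INR (S n))) * Th (S (S n)) * Rabs (h (S (S n))))
    with ((1 + sig (S (S n))) * (exp eta * exp (eta * INR (S n))) * X) by (unfold X; ring).
  apply Rmult_le_compat_r; [auto |].
  assert (0 <= exp (eta * INR (S n)) * (1 + sig (S (S n)))) by nra.
  apply Rle_trans with (exp (eta * INR (S n)) * (1 + sig (S (S n)))); nra.
Qed.

Definition flux_bound (n : nat) : R := p n + p (S n) + u n * Rabs (h 1%nat).

Lemma weighted_wS_le (n : nat) : exp (eta * INR (S n)) * Rabs (w (S n)) <= flux_bound n.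
Proof.
  assert (w_eq : Rabs (w (S n)) =
            a (S n) * z * Th (S n) * Rabs (h (S n) + h 1%nat - h (S (S n)))).
  { unfold wS. rewrite Theta_1, Rabs_mult, (Rabs_pos_eq (a (S n) * z * Th (S n))); [ring |].
    destruct (ab_pos (S n)) as [? _]; [lia |]. pose proof (Th_pos (S n)).
    apply Rmult_le_pos; [apply Rmult_le_pos |]; lra. }
  assert (triangle : Rabs (h (S n) + h 1%nat - h (S (S n))) <=
                     Rabs (h (S n)) + Rabs (h 1%nat) + Rabs (h (S (S n)))).
  { unfold Rminus. eapply Rle_trans; [apply Rabs_triang |]. rewrite Rabs_Ropp.
    pose proof (Rabs_triang (h (S n)) (h 1%nat)). lra. }
  assert (0 <= exp (eta * INR (S n)) * (a (S n) * z * Th (S n))).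
  { destruct (ab_pos (S n)) as [? _]; [lia |]. pose proof (Th_pos (S n)).
    pose proof (weight_ge1 (S n)). repeat apply Rmult_le_pos; lra. }
  pose proof (diag_term_le n). pose proof (next_term_le n).
  rewrite w_eq. unfold flux_bound, flux_weight.
  apply Rle_trans with (exp (eta * INR (S n)) * (a (S n) * z * Th (S n)) *
                        (Rabs (h (S n)) + Rabs (h 1%nat) + Rabs (h (S (S n))))).
  - rewrite <- Rmult_assoc. apply Rmult_le_compat_l; auto.
  - lra.
Qed.

Lemma flux_bound_ge0 (n : nat) : 0 <= flux_bound n.
Proof.
  pose proof (weighted_wS_le n). pose proof (weight_ge1 (S n)).
  pose proof (Rabs_pos (w (S n))). nra.
Qed.

Lemma ex_series_flux_bound : ex_series flux_bound.
Proof.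
  apply (ex_series_plus (fun n => p n + p (S n))).
  - apply (ex_series_plus p). auto. apply (proj1 (ex_series_incr_1 p)). auto.
  - apply ex_series_ext with (fun n => Rabs (h 1%nat) * u n); [intros; apply Rmult_comm |].
    apply (ex_series_scal_l _ u). auto.
Qed.

Lemma Series_flux_bound_le :
  Series flux_bound <= (2 + Series u / (exp eta * z)) * Series p.
Proof.
  assert (p_tail : ex_series (fun n => p (S n))) by (apply (proj1 (ex_series_incr_1 p)); auto).
  unfold flux_bound.
  rewrite Series_plus, Series_plus, Series_scal_r; auto.
  2: { apply (ex_series_plus p); auto. }
  2: { apply ex_series_ext with (fun n => Rabs (h 1%nat) * u n); [intros; apply Rmult_comm |].
       apply (ex_series_scal_l _ u). auto. }
  pose proof (Series_tail_le p normZD_term_ge0 h_summable).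
  pose proof (head_le_Series p normZD_term_ge0 h_summable).
  pose proof Series_flux_weight_ge0 as U_ge0.
  assert (ez_pos : 0 < exp eta * z) by (pose proof (exp_pos eta); nra).
  assert (h1_le : Rabs (h 1%nat) <= Series p / (exp eta * z)).
  { apply Rmult_le_reg_l with (exp eta * z); auto.
    replace (exp eta * z * (Series p / (exp eta * z))) with (Series p) by (field; split; apply Rgt_not_eq; [lra | apply exp_pos]).
    pose proof abs_h1_le. lra. }
  assert (Series u * Rabs (h 1%nat) <= Series u * (Series p / (exp eta * z)))
    by (apply Rmult_le_compat_l; auto).
  unfold Rdiv in *. lra.
Qed.

Lemma Theta_mul_Lop_succ (n : nat) :
  Th (S (S n)) * Lop a b z h (S (S n)) = w (S n) - w (S (S n)).
Proof.
  unfold Lop, Pop. simpl Sop. pose proof (Th_pos (S (S n))). field. lra.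
Qed.

Lemma Theta_mul_Lop_1 :
  Th 1%nat * Lop a b z h 1%nat =
  - w 1%nat - Series (fun n => w (S n))
  - (a 1%nat * z ^ 2 * h 2%nat + Series (fun n => a (S n) * z * Th (S n) * h (S (S n)))).
Proof.
  unfold Lop, Sop, Pop. rewrite Theta_1. field. lra.
Qed.

Lemma normZ_term_Lop_succ_le (n : nat) :
  normZ_term a b z eta (Lop a b z h) (S n) <= exp eta * flux_bound n + flux_bound (S n).
Proof.
  unfold normZ_term.
  rewrite Rmult_assoc, <- (Rabs_pos_eq (Th (S (S n)))) by (apply Rlt_le; auto).
  rewrite <- Rabs_mult, Theta_mul_Lop_succ, (exp_mult_INR_S eta (S n)).
  assert (Rabs (w (S n) - w (S (S n))) <= Rabs (w (S n)) + Rabs (w (S (S n)))).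
  { unfold Rminus. eapply Rle_trans; [apply Rabs_triang |]. rewrite Rabs_Ropp. lra. }
  pose proof (weighted_wS_le n) as w_le. pose proof (weighted_wS_le (S n)) as w_next_le.
  rewrite (exp_mult_INR_S eta (S n)) in w_next_le.
  pose proof (exp_pos eta). pose proof (weight_ge1 (S n)).
  assert (0 <= exp eta * exp (eta * INR (S n))) by nra.
  apply Rle_trans with (exp eta * exp (eta * INR (S n)) * (Rabs (w (S n)) + Rabs (w (S (S n))))).
  - apply Rmult_le_compat_l; auto.
  - nra.
Qed.

Lemma abs_wS_le (n : nat) : Rabs (w (S n)) <= flux_bound n.
Proof.
  pose proof (weighted_wS_le n). pose proof (weight_ge1 (S n)).
  pose proof (Rabs_pos (w (S n))). nra.
Qed.

Lemma abs_next_term_le (n : nat) : Rabs (a (S n) * z * Th (S n) * h (S (S n))) <= p (S n).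
Proof.
  pose proof (next_term_le n). pose proof (weight_ge1 (S n)).
  destruct (ab_pos (S n)) as [? _]; [lia |]. pose proof (Th_pos (S n)).
  assert (0 <= a (S n) * z * Th (S n)) by (apply Rmult_le_pos; [apply Rmult_le_pos |]; lra).
  rewrite Rabs_mult, (Rabs_pos_eq (a (S n) * z * Th (S n))) by auto.
  assert (0 <= a (S n) * z * Th (S n) * Rabs (h (S (S n))))
    by (apply Rmult_le_pos; [auto | apply Rabs_pos]).
  nra.
Qed.

Lemma normZ_term_Lop_0_le :
  normZ_term a b z eta (Lop a b z h) 0%nat <= exp eta * (2 * Series flux_bound + 2 * Series p).
Proof.
  unfold normZ_term. change (INR 1) with 1. rewrite Rmult_1_r, Rmult_assoc.
  rewrite <- (Rabs_pos_eq (Th 1%nat)) by (apply Rlt_le; auto).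
  rewrite <- Rabs_mult, Theta_mul_Lop_1.
  apply Rmult_le_compat_l; [apply Rlt_le, exp_pos |].
  pose proof flux_bound_ge0 as fb_ge0.
  pose proof (head_le_Series _ fb_ge0 ex_series_flux_bound) as fb0_le.
  pose proof (Series_tail_le p normZD_term_ge0 h_summable) as p_tail_le.
  pose proof (head_le_Series _ (fun n => normZD_term_ge0 (S n))
                (proj1 (ex_series_incr_1 p) h_summable)) as p1_le.
  assert (w1_le : Rabs (w 1%nat) <= Series flux_bound) by (pose proof (abs_wS_le 0); lra).
  assert (sum_w_le : Rabs (Series (fun n => w (S n))) <= Series flux_bound)
    by (apply Rabs_Series_le; [apply abs_wS_le | apply ex_series_flux_bound]).
  assert (a1_le : Rabs (a 1%nat * z ^ 2 * h 2%nat) <= Series p).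
  { pose proof (abs_next_term_le 0) as le0. rewrite Theta_1 in le0.
    replace (a 1%nat * z ^ 2 * h 2%nat) with (a 1%nat * z * z * h 2%nat) by ring. lra. }
  assert (sum_P_le : Rabs (Series (fun n => a (S n) * z * Th (S n) * h (S (S n)))) <= Series p).
  { eapply Rle_trans; [apply Rabs_Series_le with (g := fun n => p (S n)) | exact p_tail_le].
    - apply abs_next_term_le.
    - apply (proj1 (ex_series_incr_1 p)). auto. }
  assert (triangle : forall x y u v : R,
             Rabs (- x - y - (u + v)) <= Rabs x + Rabs y + Rabs u + Rabs v).
  { intros x y u v. unfold Rabs. repeat destruct Rcase_abs; lra. }
  eapply Rle_trans; [apply triangle |]. lra.
Qed.

Lemma normZ_Lop_le :
  ex_series (normZ_term a b z eta (Lop a b z h)) /\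
  normZ a b z eta (Lop a b z h) <= Lop_bound_constant * Series p.
Proof.
  set (T := normZ_term a b z eta (Lop a b z h)).
  set (bound := fun n => exp eta * flux_bound n + flux_bound (S n)).
  assert (T_ge0 : forall n, 0 <= T n).
  { intros n. unfold T, normZ_term. pose proof (weight_ge1 (S n)). pose proof (Th_pos (S n)).
    pose proof (Rabs_pos (Lop a b z h (S n))). repeat apply Rmult_le_pos; lra. }
  assert (fb_tail : ex_series (fun n => flux_bound (S n)))
    by (apply (proj1 (ex_series_incr_1 _)), ex_series_flux_bound).
  assert (bound_sum : ex_series bound).
  { apply (ex_series_plus (fun n => exp eta * flux_bound n)); auto.
    apply (ex_series_scal_l _ flux_bound), ex_series_flux_bound. }
  assert (T_tail_le : forall n, T (S n) <= bound n) by (intros n; apply normZ_term_Lop_succ_le).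
  assert (T_tail : ex_series (fun n => T (S n))).
  { apply (ex_series_dominated _ bound); auto. intros n. rewrite Rabs_pos_eq; auto. }
  assert (T_sum : ex_series T) by (apply (proj2 (ex_series_incr_1 T)); auto).
  split; [exact T_sum |].
  unfold normZ. fold T. rewrite (Series_incr_1 T T_sum).
  assert (tail_le : Series (fun n => T (S n)) <= Series bound)
    by (apply Series_le; auto; intros n; split; auto).
  unfold bound in tail_le. rewrite Series_plus, Series_scal_l in tail_le; auto.
  2: { apply (ex_series_scal_l _ flux_bound), ex_series_flux_bound. }
  pose proof normZ_term_Lop_0_le as head_le. fold T in head_le.
  pose proof (Series_tail_le _ flux_bound_ge0 ex_series_flux_bound).
  pose proof Series_flux_bound_le. pose proof (exp_pos eta).
  unfold Lop_bound_constant.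
  assert ((3 * exp eta + 1) * Series flux_bound <=
          (3 * exp eta + 1) * ((2 + Series u / (exp eta * z)) * Series p))
    by (apply Rmult_le_compat_l; lra).
  nra.
Qed.

End LopEstimate.

Theorem mainTheorem17 (a b : nat -> R) (z eta : R) :
  H1 a b -> H2 a b -> H3 a b -> H4 a -> H5 b ->
  0 < z -> Rbar_lt (Finite z) (zs a b) ->
  0 < eta -> Rbar_lt (Finite (z * exp (2 * eta))) (zs a b) ->
  exists K : R, 0 < K /\
    forall h : nat -> R, compact_support h ->
      ex_series (normZ_term a b z eta (Lop a b z h)) /\
      normZ a b z eta (Lop a b z h) <= K * normZD a b z eta h.
Proof.
  intros _ [[ca [ca_pos ca_le]] [cb [cb_pos cb_le]]] _ _ _ z_pos _ eta_pos radius.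
  assert (ab_pos : forall i, (1 <= i)%nat -> 0 < a i /\ 0 < b i).
  { intros i i_ge1. split; [apply Rlt_le_trans with ca | apply Rlt_le_trans with cb]; auto. }
  assert (flux_summable : ex_series (flux_weight a b z eta)).
  { apply ex_series_flux_weight; [lra |].
    eapply Rbar_le_lt_trans; [| exact radius]. simpl.
    apply Rmult_le_compat_l; [lra |]. left. apply exp_increasing. lra. }
  exists (Lop_bound_constant a b z eta).
  split; [apply Lop_bound_constant_pos; auto; lra |].
  intros h [N h_zero]. rewrite normZD_eq.
  apply normZ_Lop_le; auto; [lra |].
  apply ex_series_eventually_zero with N. intros n n_ge.
  unfold normZD_term. rewrite h_zero by lia. rewrite Rabs_R0. ring.
Qed.
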